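(* Consider the linear regression model $\boldsymbol{Y}=\boldsymbol{X}\boldsymbol{\theta}+\boldsymbol{\epsilon}$ with $\boldsymbol{Y}\in\mathbb{R}^n$, $\boldsymbol{X}$ an $n\times p$ design matrix, $\boldsymbol{\theta}\in\mathbb{R}^p$ and $\boldsymbol{\epsilon}\sim N_n(\boldsymbol{0},\sigma^2\boldsymbol{I}_n)$. Let $m^\ast=\{j:\theta_j\neq 0\}$ be the true model and $m_{\mathrm{full}}=\{1,\dots,p\}$. Let $\widehat{m}\subseteq m_{\mathrm{full}}$ be the model selected by a given model selection procedure applied to the sample $D$ of size $n$, and let $\widehat{m}^{(1)},\dots,\widehat{m}^{(B)}$ be the models obtained by applying the same procedure to bootstrap samples $D^{(1)},\dots,D^{(B)}$ generated from $D$. Fix $\alpha\in(0,1)$. Assume: (A.1) (model selection consistency) $P(\widehat{m}\not\supseteq m^\ast)=o(1)$ and $P(\widehat{m}\supsetneqq m^\ast)=o(1)$ as $n\to\infty$; (A.2) (bootstrap validity) for each resampled model, $P(\widehat{m}^{(b)}\neq\widehat{m})=o(1)$. Let $(\widehat{m}_L,\widehat{m}_U)$ be a solution of the program $$(\widehat{m}_L,\widehat{m}_U)=\underset{(m_1,m_2)\in S}{\arg\min}\left\{|m_2|-|m_1| : \widehat{r}(m_1,m_2)\ge 1-\alpha\right\},$$ where $S=\{(m_1^{(i)},m_2^{(i)}):0\le i\le p\}$ and, for each $i$, $(m_1^{(i)},m_2^{(i)})=\arg\max_{m_1,m_2}\{\widehat{r}(m_1,m_2): |m_2|-|m_1|=i,\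 \emptyset\subseteq m_1\subseteq m_2\subseteq m_{\mathrm{full}}\}$. Then $$P(\widehat{m}_L\subseteq m^\ast\subseteq\widehat{m}_U)\ge 1-\alpha+o(1).$$
   Context: Models are identified with index sets of predictors, i.e. subsets of $\{1,\dots,p\}$; $|m|$ denotes the cardinality of $m$. For nested models $m_1\subseteq m_2$, the bootstrap coverage rate is $\widehat{r}(m_1,m_2)=\frac{1}{B}\sum_{b=1}^B I(m_1\subseteq\widehat{m}^{(b)}\subseteq m_2)$, where $I(\cdot)$ is the indicator function. *)

From HB Require Import structures.
From mathcomp Require Import all_boot all_order all_algebra.
From mathcomp Require Import all_classical all_reals all_analysis.
Set Implicit Arguments. Unset Strict Implicit. Unset Printing Implicit Defensive.
Import Order.TTheory GRing.Theory Num.Theory.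
Import numFieldNormedType.Exports.
Local Open Scope classical_set_scope.
Local Open Scope ring_scope.

Definition cover_rate {R : realType} {p B : nat}
  (mb : 'I_B -> {set 'I_p}) (m1 m2 : {set 'I_p}) : R :=
  (B%:R)^-1 * \sum_(b < B) ((m1 \subset mb b) && (mb b \subset m2))%:R.

Definition width {p : nat} (m : {set 'I_p} * {set 'I_p}) : nat :=
  (#|m.2| - #|m.1|)%N.

Definition is_argmax_width {R : realType} {p : nat}
  (r : {set 'I_p} -> {set 'I_p} -> R) (i : nat) (m : {set 'I_p} * {set 'I_p}) :=
  [/\ m.1 \subset m.2, width m = i &
      forall m1 m2 : {set 'I_p}, m1 \subset m2 -> width (m1, m2) = i ->
        r m1 m2 <= r m.1 m.2].

Definition is_MCS_solution {R : realType} {p : nat}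
  (r : {set 'I_p} -> {set 'I_p} -> R) (alpha : R) (mL mU : {set 'I_p}) :=
  exists S : 'I_p.+1 -> {set 'I_p} * {set 'I_p},
    (forall i : 'I_p.+1, is_argmax_width r i (S i)) /\
    exists i0 : 'I_p.+1,
      [/\ (mL, mU) = S i0,
          1 - alpha <= r (S i0).1 (S i0).2 &
          forall i : 'I_p.+1, 1 - alpha <= r (S i).1 (S i).2 ->
            (width (S i0) <= width (S i))%N].

Definition support_model {R : realType} {p : nat} (theta : 'cV[R]_p)
  : {set 'I_p} := [set j | theta j 0 != 0].

Definition mutually_independent {R : realType} {d : measure_display}
  {T : measurableType d} (P : probability T R) {n : nat}
  (X : 'I_n -> T -> R) : Prop :=
  forall A : 'I_n -> set R, (forall i, measurable (A i)) ->
    P (\bigcap_(i in [set: 'I_n]) (X i @^-1` A i)) =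
    (\prod_(i < n) P (X i @^-1` A i))%E.

(* eps ~ N_n(0, sigma^2 I_n): components are measurable, mutually independent
   and each has law N(0, sigma^2) (normal_prob takes the standard deviation). *)
Definition gaussian_noise {R : realType} {d : measure_display}
  {T : measurableType d} (P : probability T R) {n : nat}
  (eps : T -> 'cV[R]_n) (sigma : R) : Prop :=
  [/\ forall i : 'I_n, measurable_fun setT (fun w => eps w i 0),
      mutually_independent P (fun i w => eps w i 0) &
      forall (i : 'I_n) (A : set R), measurable A ->
        P ((fun w => eps w i 0) @^-1` A) = normal_prob 0 sigma A].

From HB Require Import structures.
From mathcomp Require Import all_boot all_order all_algebra.
From mathcomp Require Import all_classical all_reals all_analysis.
Import Order.TTheory GRing.Theory Num.Theory.
Import numFieldNormedType.Exports.
Local Open Scope classical_set_scope.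
Local Open Scope ring_scope.

(** On the event that the selected model and all B bootstrap models equal the
  true model m*, the coverage rate r(m1, m2) is the indicator of
  m1 <= m* <= m2. The chosen pair is feasible, r >= 1 - alpha > 0, so it
  brackets m*. By (A.1), (A.2) and a union bound over the B + 2 failure
  events, that event has probability 1 - o(1). *)

Lemma cover_rate_gt0 {R : realType} {p B : nat} {mb : 'I_B -> {set 'I_p}}
    {m1 m2 : {set 'I_p}} :
  (0 : R) < cover_rate mb m1 m2 ->
  exists b, (m1 \subset mb b) && (mb b \subset m2).
Proof.
move=> rate_gt0.
have [b sandwich|none] :=
  pickP [pred b | (m1 \subset mb b) && (mb b \subset m2)]; first by exists b.
move: rate_gt0; rewrite /cover_rate big1 ?mulr0 ?ltxx // => b _.
by move: (none b) => /= ->.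
Qed.

Lemma MCS_solution_sandwich {R : realType} {p B : nat}
    {mb : 'I_B -> {set 'I_p}} {alpha : R} {m mL mU : {set 'I_p}} :
  alpha < 1 -> (forall b, mb b = m) ->
  is_MCS_solution (cover_rate mb) alpha mL mU ->
  (mL \subset m) && (m \subset mU).
Proof.
move=> alpha_lt1 mbE [S [_ [i0 [eqS coverS _]]]].
rewrite -eqS /= in coverS.
have rate_gt0 : (0 : R) < cover_rate mb mL mU.
  by apply: lt_le_trans _ coverS; rewrite subr_gt0.
by have [b] := cover_rate_gt0 rate_gt0; rewrite mbE.
Qed.

Lemma measurable_fin_preimage {d} {T : measurableType d} {U : finType}
    (f : T -> U) :
  (forall u, measurable (f @^-1` [set u])) ->
  forall Q : set U, measurable (f @^-1` Q).
Proof.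
move=> mf Q.
have -> : f @^-1` Q = \bigcup_(u in Q) f @^-1` [set u].
  apply/seteqP; split => [w Qfw | w [u Qu fwu]]; first by exists (f w).
  by rewrite /preimage /= fwu.
exact: fin_bigcup_measurable finite_finset _.
Qed.

Section UnionBound.
Context {d} {T : measurableType d} {R : realType} (mu : {measure set T -> \bar R}).

Lemma le_measure_bigsetU (I : Type) (r : seq I) (F : I -> set T) :
  (forall i, measurable (F i)) ->
  (mu (\big[setU/set0]_(i <- r) F i) <= \sum_(i <- r) mu (F i))%E.
Proof.
move=> mF; elim: r => [|i r IHr]; first by rewrite !big_nil measure0.
rewrite !big_cons; apply: le_trans (measureU2 _ _ _) (leeD2l _ IHr) => //.
exact: bigsetU_measurable.
Qed.

Lemma le_measure_bigcup_fin (I : finType) (F : I -> set T) :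
  (forall i, measurable (F i)) ->
  (mu (\bigcup_i F i) <= \sum_i mu (F i))%E.
Proof.
have -> : [set: I] = [set` index_enum I].
  by apply/seteqP; split => // i _; rewrite /= mem_index_enum.
by rewrite bigcup_seq; exact: le_measure_bigsetU.
Qed.

End UnionBound.

Section VanishingEvents.
Context {R : realType} {d : nat -> measure_display}
  {Omega : forall n, measurableType (d n)}.

Lemma measure_cover_cvg0 (mu : forall n, {measure set Omega n -> \bar R})
    (I : finType) (A : forall n, set (Omega n)) (F : forall n, I -> set (Omega n)) :
  (forall n, measurable (A n)) -> (forall n i, measurable (F n i)) ->
  (forall n, A n `<=` \bigcup_i F n i) ->
  (forall i, (fun n => mu n (F n i)) @ \oo --> 0%E) ->
  (fun n => mu n (A n)) @ \oo --> 0%E.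
Proof.
move=> mA mF AF F_cvg0.
apply: (@squeeze_cvge _ _ _ _ (cst 0%E) _ (fun n => \sum_i mu n (F n i))%E).
- apply: nearW => n; rewrite measure_ge0 /=.
  apply: le_trans (le_measure_bigcup_fin (mu n) _ _ (mF n)).
  apply: (le_measure _ _ _ (AF n)); rewrite inE //.
  exact: fin_bigcup_measurable finite_finset _.
- exact: cvg_cst.
- have sum0 : (\sum_(i : I) 0 : \bar R)%E = 0%E by rewrite big1.
  rewrite -[X in _ --> X]sum0.
  by apply: cvg_nnesum => // i _; apply: nearW => n; exact: measure_ge0.
Qed.

Lemma prob_setC_cvg0 (P : forall n, probability (Omega n) R)
    (E : forall n, set (Omega n)) :
  (forall n, measurable (E n)) ->
  (fun n => P n (~` E n)) @ \oo --> 0%E ->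
  exists e : nat -> R, e @ \oo --> 0 /\ forall n, P n (E n) = (1 + e n)%:E.
Proof.
move=> mE PC_cvg0; exists (fun n => - fine (P n (~` E n))); split.
  by rewrite -oppr0; apply: cvgN; exact: fine_cvg.
move=> n; have mEC := measurableC (mE n).
rewrite EFinD EFinN fineK; last exact: fin_num_measure.
by rewrite -probability_setC ?setCK.
Qed.

End VanishingEvents.

Section ConsistentSelection.
Context {R : realType} {p B : nat} {d : nat -> measure_display}
  {Omega : forall n, measurableType (d n)} (P : forall n, probability (Omega n) R).
Variables (msel : forall n, Omega n -> {set 'I_p})
  (mboot : forall n, 'I_B -> Omega n -> {set 'I_p}) (mstar : {set 'I_p}).

Hypothesis measurable_models : forall n m (f : {ffun 'I_B -> {set 'I_p}}),
  measurable [set w | msel n w = m /\ forall b, mboot n b w = f b].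

Lemma measurable_models_event n
    (Q : {set 'I_p} -> ('I_B -> {set 'I_p}) -> bool) :
  measurable [set w | Q (msel n w) (fun b => mboot n b w)].
Proof.
pose models w := (msel n w, [ffun b => mboot n b w]).
have -> : [set w | Q (msel n w) (fun b => mboot n b w)] =
          models @^-1` [set x : {set 'I_p} * {ffun 'I_B -> {set 'I_p}} | Q x.1 x.2].
  apply/funext => w; rewrite /preimage /=.
  by have /funext -> : [ffun b => mboot n b w] =1 mboot n ^~ w by exact: ffunE.
apply: measurable_fin_preimage => -[m f].
have -> : models @^-1` [set (m, f)] =
          [set w | msel n w = m /\ forall b, mboot n b w = f b].
  apply/seteqP; split => w /=; first by case=> <- <-; split=> // b; rewrite ffunE.
  by case=> <- fE; congr pair; apply/ffunP => b; rewrite ffunE fE.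
exact: measurable_models.
Qed.

Definition models_true n : set (Omega n) :=
  [set w | (msel n w == mstar) && [forall b, mboot n b w == mstar]].

Lemma measurable_models_true n : measurable (models_true n).
Proof.
exact: (measurable_models_event n
          (fun m f => (m == mstar) && [forall b, f b == mstar])).
Qed.

Hypotheses
  (msel_under : (fun n => P n [set w | ~~ (mstar \subset msel n w)]) @ \oo --> 0%E)
  (msel_over : (fun n => P n [set w | mstar \proper msel n w]) @ \oo --> 0%E)
  (mboot_valid : forall b,
     (fun n => P n [set w | mboot n b w != msel n w]) @ \oo --> 0%E).

Lemma msel_wrong_cvg0 : (fun n => P n [set w | msel n w != mstar]) @ \oo --> 0%E.
Proof.
pose F n (i : bool) := if i then [set w | ~~ (mstar \subset msel n w)]
                       else [set w | mstar \proper msel n w].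
apply: (measure_cover_cvg0 P _ _ F).
- by move=> n; exact: (measurable_models_event n (fun m _ => m != mstar)).
- move=> n [] /=.
  + exact: (measurable_models_event n (fun m _ => ~~ (mstar \subset m))).
  + exact: (measurable_models_event n (fun m _ => mstar \proper m)).
- move=> n w /= sel_wrong.
  have [sub|] := boolP (mstar \subset msel n w); last by exists true.
  by exists false => //=; rewrite finset.properEneq eq_sym sel_wrong.
- by case.
Qed.

Lemma prob_models_true : exists e : nat -> R,
  e @ \oo --> 0 /\ forall n, P n (models_true n) = (1 + e n)%:E.
Proof.
apply: prob_setC_cvg0; first exact: measurable_models_true.
pose F n (i : option 'I_B) := if i is Some b then [set w | mboot n b w != msel n w]
                              else [set w | msel n w != mstar].
apply: (measure_cover_cvg0 P _ _ F).
- by move=> n; apply: measurableC; exact: measurable_models_true.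
- move=> n [b|] /=.
  + exact: (measurable_models_event n (fun m f => f b != m)).
  + exact: (measurable_models_event n (fun m _ => m != mstar)).
- move=> n w /= /negP; rewrite negb_and => /orP[sel_wrong|/forallPn[b boot_wrong]].
    by exists None.
  have [sel_true|] := eqVneq (msel n w) mstar; last by exists None.
  by exists (Some b) => //=; rewrite sel_true.
- by case=> [b|]; [exact: mboot_valid | exact: msel_wrong_cvg0].
Qed.

End ConsistentSelection.

Theorem theorem1 (R : realType) (p B : nat) (theta : 'cV[R]_p) (sigma alpha : R)
  (d : nat -> measure_display) (Omega : forall n : nat, measurableType (d n))
  (P : forall n : nat, probability (Omega n) R)
  (X : forall n : nat, 'M[R]_(n, p))
  (eps : forall n : nat, Omega n -> 'cV[R]_n)
  (sel : forall n : nat, 'M[R]_(n, p) * 'cV[R]_n -> {set 'I_p})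
  (Dboot : forall n : nat, 'I_B -> Omega n -> 'M[R]_(n, p) * 'cV[R]_n)
  (mL mU : forall n : nat, Omega n -> {set 'I_p}) :
  0 < sigma -> 0 < alpha < 1 -> (0 < B)%N ->
  (* epsilon ~ N_n(0, sigma^2 I_n), Y = X theta + epsilon *)
  (forall n, gaussian_noise (P n) (eps n) sigma) ->
  (* measurability of the (joint) selected models *)
  (forall n (m : {set 'I_p}) (f : {ffun 'I_B -> {set 'I_p}}),
     measurable [set w | sel n (X n, X n *m theta + eps n w) = m /\
                         forall b, sel n (Dboot n b w) = f b]) ->
  (forall n (m1 m2 : {set 'I_p}), measurable [set w | mL n w = m1 /\ mU n w = m2]) ->
  (* (A.1) model selection consistency *)
  ((fun n => P n [set w | ~~ (support_model theta \subset
                               sel n (X n, X n *m theta + eps n w))])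
     @ \oo --> 0%E) ->
  ((fun n => P n [set w | support_model theta \proper
                            sel n (X n, X n *m theta + eps n w)])
     @ \oo --> 0%E) ->
  (* (A.2) bootstrap validity *)
  (forall b : 'I_B,
     (fun n => P n [set w | sel n (Dboot n b w) != sel n (X n, X n *m theta + eps n w)])
       @ \oo --> 0%E) ->
  (* (mL, mU) solves the program *)
  (forall n w, is_MCS_solution (cover_rate (fun b => sel n (Dboot n b w))) alpha
                               (mL n w) (mU n w)) ->
  exists e : nat -> R, e @ \oo --> 0 /\
    forall n, ((1 - alpha + e n)%:E <=
               P n [set w | (mL n w \subset support_model theta) &&
                            (support_model theta \subset mU n w)])%E.
Proof.
move=> _ /andP[alpha_gt0 alpha_lt1] _ _ measurable_models measurable_LU
  under over boot solution.
have [e [e_cvg0 Ptrue]] := prob_models_true P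
  (fun n w => sel n (X n, X n *m theta + eps n w)) (fun n b w => sel n (Dboot n b w))
  (support_model theta) measurable_models under over boot.
exists e; split => // n.
pose bounds w := (mL n w, mU n w).
have measurable_sandwich : measurable (bounds @^-1`
    [set m : {set 'I_p} * {set 'I_p} |
       (m.1 \subset support_model theta) && (support_model theta \subset m.2)]).
  apply: measurable_fin_preimage => -[m1 m2].
  rewrite (_ : _ @^-1` _ = [set w | mL n w = m1 /\ mU n w = m2]) //.
  by apply/seteqP; split => w; rewrite /preimage /bounds /= => -[-> ->].
apply: (@le_trans _ _ (1 + e n)%:E); first by rewrite lee_fin lerD2r gerBl ltW.
rewrite -Ptrue; apply: le_measure; rewrite ?inE //.
  exact: measurable_models_true.
move=> w /andP[_ /forallP boot_true]; rewrite /mkset.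
by apply: (MCS_solution_sandwich alpha_lt1 _ (solution n w)) => b; exact/eqP.
Qed.
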